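(* Let $X$ be a linearly ordered set and let $n\ge6$ be even. Then $\mathrm{med}_3\in\langle\{m^n_{n/2}\}\rangle$ and $\mathrm{med}_3\in\langle\{m^n_{n/2+1}\}\rangle$; in each case $\mathrm{med}_3(x_1,x_2,x_3)$ is obtained by substituting into $m^n_{n/2}$ (resp. $m^n_{n/2+1}$) the tuple $(x_1,\dots,x_1,x_2,\dots,x_2,x_3,\dots,x_3)$ where $x_j$ occurs $\lfloor n/3\rfloor+1$ times if $j\le R(n/3)$ and $\lfloor n/3\rfloor$ times otherwise. Consequently these lower and upper medians generate all median functions $\mathrm{med}_m$, $m\ge3$ odd.
   Context: For $n\ge1$, $1\le k\le n$, $m^n_k(x_1,\dots,x_n)$ is the $k$-th smallest entry of $(x_1,\dots,x_n)$ (counted with multiplicity); for odd $m$, $\mathrm{med}_m=m^m_{(m+1)/2}$. $R(n/3)$ is the remainder of $n$ upon division by $3$. A clone on $X$ is a set of finitary operations containing all projections and closed under composition; $\langle\mathscr F\rangle$ is the smallest clone containing $\mathscr F$. *)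

From mathcomp Require Import all_boot all_order.
Set Implicit Arguments. Unset Strict Implicit. Unset Printing Implicit Defensive.
Import Order.TTheory.

Definition op (X : Type) (k : nat) := ('I_k -> X) -> X.

Definition opset (X : Type) := forall k : nat, op X k -> Prop.

Definition is_clone (X : Type) (C : opset X) : Prop :=
  (forall (k : nat) (i : 'I_k), C k (fun x => x i)) /\
  (forall (n k : nat) (f : op X n) (g : 'I_n -> op X k),
      C n f -> (forall i, C k (g i)) -> C k (fun x => f (fun i => g i x))).

Definition generated (X : Type) (F : opset X) : opset X :=
  fun k f => forall C : opset X, is_clone C ->
    (forall k' g, F k' g -> C k' g) -> C k f.
Arguments generated {X} F k f.

Definition singleton_op (X : Type) (n : nat) (f : op X n) : opset X :=
  fun k g => existT (op X) k g = existT (op X) n f.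

(* m^n_k (for n >= 1, witnessed by hn): the k-th smallest entry of
   (x_1,...,x_n), counted with multiplicity (1-based k). *)
Definition m_ {d : Order.disp_t} {X : orderType d} (n k : nat) (hn : (0 < n)%N)
  : op X n :=
  fun x => nth (x (Ordinal hn)) (sort (@Order.le d X) [seq x i | i <- enum 'I_n]) k.-1.

Arguments m_ {d X} n k hn.

Definition med {d : Order.disp_t} {X : orderType d} (m : nat) (hm : (0 < m)%N)
  : op X m := m_ m (m.+1./2) hm.
Arguments med {d X} m hm.

(* Block index of position i (0-based) in the tuple
   (x_1,..,x_1,x_2,..,x_2,x_3,..,x_3) of length n, where x_j (1-based)
   occurs n/3 + 1 times if j <= n %% 3 and n/3 times otherwise. *)
Definition block3 (n : nat) (i : nat) : 'I_3 :=
  let c0 := n %/ 3 + (0 < n %% 3) in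
  let c1 := n %/ 3 + (1 < n %% 3) in
  if i < c0 then inord 0 else if i < c0 + c1 then inord 1 else inord 2.

From mathcomp Require Import all_boot all_order zify.
From Stdlib Require Import FunctionalExtensionality.
Set Implicit Arguments. Unset Strict Implicit. Unset Printing Implicit Defensive.
Import Order.TTheory.

(* Order statistics are compared through thresholds: [t <= m^n_k(x)] iff fewer
   than [k] entries of [x] lie below [t].  Substituting the three-block tuple,
   the number of entries below [t] is a sum of block sizes, and since one block
   has fewer than [n/2] entries while two blocks have more than [n/2], it stays
   below [n/2] (resp. [n/2 + 1]) exactly when at most one of [x1, x2, x3] is
   below [t], which is the threshold description of [med_3].
   For the generation of [med_m], consider the minors [x |-> med_N(x o h)] of
   [med_N], [N] odd.  If [h] takes three distinct values [p, q, r], the minor is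
   [med_3] of the three minors obtained by merging the [q]-block into the
   [p]-block, [r] into [q] and [p] into [r]; each of these has fewer values, and
   a minor with at most two values is a projection, because one value is taken
   on a strict majority of the coordinates. *)

Section Clones.
Variable X : Type.

Lemma clone_minor (C : opset X) n k (g : op X n) (h : 'I_n -> 'I_k) :
  is_clone C -> C n g -> C k (fun x => g (fun i => x (h i))).
Proof. by move=> [Cproj Ccomp] Cg; apply: Ccomp => // i; apply: Cproj. Qed.

Lemma generated_is_clone (F : opset X) : is_clone (generated F).
Proof.
split=> [k i C [Cproj _] _ | n k f g Gf Gg C CC FC]; first exact: Cproj.
by case: (CC) => _ Ccomp; apply: Ccomp => [|i]; [apply: Gf | apply: Gg].
Qed.

Lemma generated_singleton n (f : op X n) : generated (singleton_op f) n f.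
Proof. by move=> C _; apply. Qed.

End Clones.

Lemma count_iota_const (p : pred nat) m n b :
  (forall i, m <= i < m + n -> p i = b) -> count p (iota m n) = b * n.
Proof.
move=> H; rewrite (@eq_in_count _ _ (fun _ => b)); last first.
  by move=> i; rewrite mem_iota => /H.
by case: b {H} => /=; [rewrite count_predT size_iota mul1n | rewrite count_pred0].
Qed.

Lemma count_block3 n (P : pred 'I_3) :
  count (fun i : 'I_n => P (block3 n i)) (enum 'I_n) =
  P (inord 0) * (n %/ 3 + (0 < n %% 3)) + P (inord 1) * (n %/ 3 + (1 < n %% 3))
  + P (inord 2) * (n %/ 3).
Proof.
rewrite -[count _ _](count_map val (fun j => P (block3 n j))) val_enum_ord.
set c0 := n %/ 3 + _; set c1 := n %/ 3 + _.
have En : n = c0 + (c1 + n %/ 3).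
  by rewrite /c0 /c1 {1}(divn_eq n 3); case: (n %% 3) (ltn_mod n 3) => [|[|[|]]] //=; lia.
rewrite [in iota 0 n]En (iotaD 0 c0) add0n (iotaD c0 c1) !count_cat addnA.
rewrite (@count_iota_const _ 0 c0 (P (inord 0))); last first.
  by move=> i /andP[_ hi]; rewrite /block3 -/c0 ifT.
rewrite (@count_iota_const _ c0 c1 (P (inord 1))); last first.
  by move=> i /andP[h0 h1]; rewrite /block3 -/c0 -/c1 ifF ?ifT //; lia.
rewrite (@count_iota_const _ (c0 + c1) _ (P (inord 2))) // => i /andP[h1 _].
by rewrite /block3 -/c0 -/c1 ifF ?ifF //; lia.
Qed.

(* A single block has fewer than [n/2] entries, while any two blocks together
   have at least [n/2 + 1]; this is where [6 <= n] is needed. *)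
Lemma block3_count_ltn n K (b0 b1 b2 : bool) : 6 <= n -> ~~ odd n ->
  n./2 <= K <= (n./2).+1 ->
  (b0 * (n %/ 3 + (0 < n %% 3)) + b1 * (n %/ 3 + (1 < n %% 3)) + b2 * (n %/ 3) < K)
  = (b0 + b1 + b2 < 2).
Proof.
move=> n6 ev hK; have := odd_double_half n; rewrite (negbTE ev) add0n -addnn.
have := divn_eq n 3; case: (n %% 3) (ltn_mod n 3) => [|[|[|r]]] //= _;
  case: b0; case: b1; case: b2 => /=; lia.
Qed.

Definition relabel a N (h : 'I_N -> 'I_a) (p q : 'I_a) : 'I_N -> 'I_a :=
  fun s => if h s == p then q else h s.

Lemma card_relabel_lt a N (h : 'I_N -> 'I_a) p q :
  p \in h @: setT -> q \in h @: setT -> p != q ->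
  #|relabel h p q @: setT| < #|h @: setT|.
Proof.
move=> hp hq pq; rewrite [#|h @: _|](cardsD1 p) hp add1n ltnS; apply: subset_leq_card.
apply/subsetP => _ /imsetP[s _ ->]; rewrite /relabel.
case: ifP => [_|hs]; rewrite !inE; first by rewrite eq_sym pq hq.
by rewrite hs imset_f ?inE.
Qed.

Lemma count_relabel_le a N (h : 'I_N -> 'I_a) p q (P : pred 'I_a) :
  P q ==> P p -> count (P \o relabel h p q) (enum 'I_N) <= count (P \o h) (enum 'I_N).
Proof.
by move=> Pqp; apply: sub_count => s /=; rewrite /relabel; case: eqP => [->|//]; apply/implyP.
Qed.

Lemma count_relabel_ge a N (h : 'I_N -> 'I_a) p q (P : pred 'I_a) :
  P p ==> P q -> count (P \o h) (enum 'I_N) <= count (P \o relabel h p q) (enum 'I_N).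
Proof.
by move=> Ppq; apply: sub_count => s /=; rewrite /relabel; case: eqP => [->|//]; apply/implyP.
Qed.

Lemma ltn_median3 (bp bq br : bool) c cqp crq cpr k :
  (bp ==> bq -> cqp <= c) -> (bq ==> bp -> c <= cqp) ->
  (bq ==> br -> crq <= c) -> (br ==> bq -> c <= crq) ->
  (br ==> bp -> cpr <= c) -> (bp ==> br -> c <= cpr) ->
  (c < k) = ((k <= cqp) + (k <= crq) + (k <= cpr) < 2).
Proof.
move=> /implyP H1 /implyP H2 /implyP H3 /implyP H4 /implyP H5 /implyP H6.
by case: bp bq br H1 H2 H3 H4 H5 H6 => [] [] [] /=; lia.
Qed.

Section OrderStatistics.
Variables (d : Order.disp_t) (X : orderType d).

Lemma le_nth_sorted (s : seq X) (z t : X) k : sorted <=%O s -> 0 < k <= size s ->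
  (t <= nth z s k.-1)%O = (count (fun y => y < t)%O s < k).
Proof.
move=> so /andP[k0 ks].
have le_nth i j : i <= j -> j < size s -> (nth z s i <= nth z s j)%O.
  move=> ij js; apply: (sorted_leq_nth le_trans le_refl) => //.
  by rewrite inE; apply: leq_ltn_trans js.
have -> : count (fun y => y < t)%O s =
          count (fun i => nth z s i < t)%O (iota 0 (size s)).
  by rewrite -{1}(mkseq_nth z s) /mkseq count_map.
have -> : size s = k.-1 + (size s - k.-1) by lia.
rewrite iotaD count_cat add0n.
case: leP => [tle|ltt].
- rewrite (@count_iota_const _ k.-1 _ false) ?muln0 ?addn0; last first.
    move=> i /andP[ki ik]; apply/negbTE; rewrite -leNgt.
    by apply: le_trans tle (le_nth _ _ ki _); lia.
  by have := count_size (fun i => (nth z s i < t)%O) (iota 0 k.-1); rewrite size_iota; lia.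
- symmetry; apply/negbTE; rewrite -leqNgt.
  have -> : size s - k.-1 = 1 + (size s - k) by lia.
  rewrite iotaD count_cat (@count_iota_const _ 0 _ true); last first.
    by move=> i /andP[_ ik]; apply: le_lt_trans ltt; apply: le_nth; lia.
  by rewrite /= ltt mul1n; lia.
Qed.

Lemma le_nth_sort (s : seq X) (z t : X) k : 0 < k <= size s ->
  (t <= nth z (sort <=%O s) k.-1)%O = (count (fun y => y < t)%O s < k).
Proof.
move=> hk; rewrite le_nth_sorted ?size_sort ?sort_sorted //; last exact: le_total.
by rewrite (permP (permEl (perm_sort _ s))).
Qed.

Lemma eq_le_lower (a b : X) : (forall t, (t <= a)%O = (t <= b)%O) -> a = b.
Proof. by move=> H; apply/le_anti; rewrite -H lexx /= H lexx. Qed.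

Lemma le_m (n k : nat) (hn : 0 < n) (x : 'I_n -> X) t : 0 < k <= n ->
  (t <= m_ n k hn x)%O = (count (fun i => x i < t)%O (enum 'I_n) < k).
Proof. by move=> hk; rewrite /m_ le_nth_sort ?count_map // size_map size_enum_ord. Qed.

Lemma le_med (n : nat) (hn : 0 < n) (x : 'I_n -> X) t :
  (t <= med n hn x)%O = (count (fun i => x i < t)%O (enum 'I_n) < n.+1./2).
Proof. by rewrite le_m //; apply/andP; split; lia. Qed.

Lemma enum_ord3 : enum 'I_3 = [:: inord 0; inord 1; inord 2].
Proof. by apply: (inj_map val_inj); rewrite val_enum_ord /= !inordK. Qed.

Lemma le_med3 (y : 'I_3 -> X) t : (t <= med 3 isT y)%O =
  ((y (inord 0) < t)%O + (y (inord 1) < t)%O + (y (inord 2) < t)%O < 2).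
Proof. by rewrite le_med enum_ord3 /= addn0 addnA. Qed.

Lemma med3_block3 n K (hn : 0 < n) (x : 'I_3 -> X) : 6 <= n -> ~~ odd n ->
  n./2 <= K <= (n./2).+1 -> med 3 isT x = m_ n K hn (fun i => x (block3 n i)).
Proof.
move=> n6 ev hK; apply: eq_le_lower => t.
have := odd_double_half n; rewrite (negbTE ev) add0n -addnn => halfn.
rewrite le_med3 le_m; last by apply/andP; split; lia.
by rewrite (count_block3 n (fun j => x j < t)%O) block3_count_ltn.
Qed.

End OrderStatistics.

Section MedianMinors.
Variables (d : Order.disp_t) (X : orderType d).

(* [F x = med_N (x (h 0), ..., x (h (N-1)))], stated through thresholds so that
   no proof of [0 < N] is carried around. *)
Definition med_minor a N (h : 'I_N -> 'I_a) (F : op X a) :=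
  forall x t, (t <= F x)%O = (count (fun s => x (h s) < t)%O (enum 'I_N) < N.+1./2).

Lemma med_minor_med a N (h : 'I_N -> 'I_a) (hN : 0 < N) :
  med_minor h (fun x => med N hN (fun s => x (h s))).
Proof. by move=> x t; rewrite le_med. Qed.

Lemma med_minor_majority a N (h : 'I_N -> 'I_a) F (P : pred 'I_N) w :
  odd N -> med_minor h F -> (forall s, P s -> h s = w) ->
  N.+1./2 <= count P (enum 'I_N) -> forall x, F x = x w.
Proof.
move=> oN hF hP hc x; apply: eq_le_lower => t; rewrite hF.
have := count_predC P (enum 'I_N); rewrite size_enum_ord.
have := odd_double_half N; rewrite oN -addnn => halfN hPC.
case: (ltP (x w) t) => [lt|ge].
- apply/negbTE; rewrite -leqNgt; apply: leq_trans hc _; apply: sub_count => s Ps.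
  by rewrite (hP _ Ps).
- apply: leq_ltn_trans (_ : count (predC P) (enum 'I_N) < _); last by lia.
  by apply: sub_count => s /=; apply: contraTN => Ps; rewrite (hP _ Ps) -leNgt.
Qed.

Lemma med_minor_two_valued a N (h : 'I_N -> 'I_a) F : odd N -> med_minor h F ->
  (forall i j l, [|| h i == h j, h j == h l | h i == h l]) ->
  exists w, F = fun x => x w.
Proof.
move=> oN hF two; set s0 := Ordinal (odd_gt0 oN).
have := odd_double_half N; rewrite oN -addnn => halfN.
have := count_predC (fun s => h s == h s0) (enum 'I_N); rewrite size_enum_ord => hC.
case: (leqP N.+1./2 (count (fun s => h s == h s0) (enum 'I_N))) => [maj|min].
  by exists (h s0); apply: functional_extensionality; apply: med_minor_majority maj => // s /eqP.
have /hasP[j _ /= hj] : has (predC (fun s => h s == h s0)) (enum 'I_N).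
  by rewrite has_count; lia.
exists (h j); apply: functional_extensionality.
apply: (med_minor_majority (P := predC (fun s => h s == h s0))) => //; last by lia.
move=> s /= hs; move: (two s0 j s).
by rewrite (eq_sym (h s0)) (negbTE hj) (eq_sym (h s0)) (negbTE hs) orbF => /eqP.
Qed.

(* Of the three values [x p], [x q], [x r] two lie on the same side of [t], so
   one of the relabellings preserves the number of entries below [t] and the
   other two move it in opposite directions: that number is the median of the
   three relabelled counts. *)
Lemma med_minor_relabel_med3 a N (h : 'I_N -> 'I_a) (hN : 0 < N) F (p q r : 'I_a) :
  med_minor h F ->
  let G u v : op X a := fun x => med N hN (fun s => x (relabel h u v s)) in
  F = fun x => med 3 isT (fun k => nth (G q p) [:: G q p; G r q; G p r] k x).
Proof.
move=> hF G; apply: functional_extensionality => x; apply: eq_le_lower => t.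
rewrite hF le_med3 !inordK //= !ltNge !le_med -!leqNgt.
apply: (@ltn_median3 (x p < t)%O (x q < t)%O (x r < t)%O);
  by [exact: (@count_relabel_le _ _ h _ _ (fun v => x v < t)%O)
     | exact: (@count_relabel_ge _ _ h _ _ (fun v => x v < t)%O)].
Qed.

Lemma clone_med_minor (C : opset X) a N (h : 'I_N -> 'I_a) F :
  is_clone C -> C 3 (med 3 isT) -> odd N -> med_minor h F -> C a F.
Proof.
move=> CC C3 oN; have [c] := ubnP #|h @: setT|; elim: c => // c IH in h F *.
rewrite ltnS => hc hF; have hN := odd_gt0 oN.
case: (boolP [exists i, exists j, exists l, [&& h i != h j, h j != h l & h i != h l]]).
- move=> /existsP[i /existsP[j /existsP[l /and3P[ij jl il]]]].
  have Crelabel u v : h u != h v ->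
      C a (fun x => med N hN (fun s => x (relabel h (h u) (h v) s))).
    move=> uv; apply: IH (med_minor_med _ hN); apply: leq_trans hc.
    by apply: card_relabel_lt uv; rewrite imset_f ?inE.
  rewrite (med_minor_relabel_med3 hN (h i) (h j) (h l) hF).
  case: CC => _ Ccomp; apply: Ccomp C3 _ => -[[|[|[|k]]] //= _];
    by apply: Crelabel; rewrite // eq_sym.
- move=> /existsPn none; have [|w ->] := med_minor_two_valued oN hF; last by case: CC.
  move=> i j l; move: (none i) => /existsPn /(_ j) /existsPn /(_ l).
  by rewrite !negb_and !negbK.
Qed.

Lemma clone_med (C : opset X) m (hm : 0 < m) :
  is_clone C -> C 3 (med 3 isT) -> odd m -> C m (med m hm).
Proof. by move=> CC C3 om; apply: clone_med_minor CC C3 om (med_minor_med id hm). Qed.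

End MedianMinors.

Theorem mainTheorem13 (d : Order.disp_t) (X : orderType d) (n : nat)
  (hn6 : 6 <= n) (hev : ~~ odd n) :
  let hn : 0 < n := @leq_trans 6 1 n isT hn6 in
  let lo : op X n := m_ n (n./2) hn in
  let hi : op X n := m_ n (n./2).+1 hn in
  let med3 : op X 3 := med 3 isT in
  [/\ (forall x : 'I_3 -> X, med3 x = lo (fun i => x (block3 n i))),
      generated (singleton_op lo) 3 med3,
      (forall x : 'I_3 -> X, med3 x = hi (fun i => x (block3 n i))),
      generated (singleton_op hi) 3 med3 &
      (forall (m : nat) (hm : 0 < m), 3 <= m -> odd m ->
         generated (singleton_op lo) m (med m hm) /\
         generated (singleton_op hi) m (med m hm))].
Proof.
move=> hn lo hi med3.
have Elo x : med3 x = lo (fun i => x (block3 n i)) by apply: med3_block3; rewrite ?leqnn ?leqnSn.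
have Ehi x : med3 x = hi (fun i => x (block3 n i)) by apply: med3_block3; rewrite ?leqnn ?leqnSn.
have Glo : generated (singleton_op lo) 3 med3.
  rewrite (functional_extensionality _ _ Elo).
  exact: clone_minor _ (generated_is_clone _) (@generated_singleton _ _ lo).
have Ghi : generated (singleton_op hi) 3 med3.
  rewrite (functional_extensionality _ _ Ehi).
  exact: clone_minor _ (generated_is_clone _) (@generated_singleton _ _ hi).
split=> // m hm _ om.
by split; [apply: clone_med (generated_is_clone _) Glo om
           | apply: clone_med (generated_is_clone _) Ghi om].
Qed.
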